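(* Let $k$ be a positive integer. If $G$ is an $(A,U,B)$-structure graph (with respect to $k$), then $G$ is $k$-placeable.
   Context: All graphs are finite and simple. For a graph $H$ on $m$ vertices, a $k$-placement of $H$ (in $K_m$) is a $k$-tuple $(\phi_1,\dots,\phi_k)$ of bijections $\phi_i:V(H)\to V(K_m)$ such that the edge sets $\phi_i(E(H))=\{\phi_i(x)\phi_i(y):xy\in E(H)\}$ are pairwise disjoint; $H$ is $k$-placeable if it has one. A vertex $v$ is $k$-placed if $\phi_i(v)\neq\phi_j(v)$ for all $i\ne j$, and $k$-fixed if $\phi_i(v)=\phi_j(v)$ for all $i,j$. $N_G(X)$ denotes the set of vertices outside $X$ adjacent to some vertex of $X$, and $N_A(u)$ the set of neighbours of $u$ in $V(A)$. Definition: let $A,B$ be vertex-disjoint induced subgraphs of $G$ and let $U\subseteq V(G)$ be an independent set (possibly empty) such that either $V(A),V(B),U$ is a partition of $V(G)$, or $V(A),V(B)$ is a partition of $V(G)$ with $U\subseteq V(A)$ or $U\subseteq V(B)$. $G$ is an $(A,U,B)$-structure graph if (i) at most one vertex $a\in V(A)\setminus U$ has neighbours in $V(B)\setminus U$, and for each $u\in U$ we have $|N_A(u)|\le 1$ if $U\cap V(A)=\emptyset$ and $|N_B(u)|\le1$ if $U\cap V(B)=\emptyset$; and (ii) each of $A$ and $B$ has a $k$-placement (in $K_{|V(A)|}$, resp. $K_{|V(B)|}$) such that the vertices of $N_G(U)$ and the vertex $a$ are $k$-placed and each vertex of $U$ is $k$-fixed (when $U$ is disjoint from $V(A)\cup V(B)$,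 $U$ is placed on its own $|U|$ vertices with each vertex $k$-fixed). *)

From mathcomp Require Import all_boot.
Set Implicit Arguments. Unset Strict Implicit. Unset Printing Implicit Defensive.

Section Defs.
Variable T : finType.

Definition simple_graph (e : rel T) : Prop := symmetric e /\ irreflexive e.

Definition edge_image (e : rel T) (S : {set T}) (f : T -> T) : {set {set T}} :=
  [set [set f x; f y] | x in S, y in S & e x y].

(* A k-placement of the induced subgraph G[S] in the complete graph on the
   vertex set S itself (|S| vertices): k bijections S -> S whose images of the
   edge set are pairwise disjoint. *)
Definition is_placement (e : rel T) (S : {set T}) (k : nat)
    (phi : 'I_k -> T -> T) : Prop :=
  (forall i, {in S &, injective (phi i)} /\ {in S, forall x, phi i x \in S}) /\
  (forall i j : 'I_k, i != j -> [disjoint edge_image e S (phi i) & edge_image e S (phi j)]).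

Definition placeable (e : rel T) (k : nat) : Prop :=
  exists phi : 'I_k -> T -> T, is_placement e [set: T] phi.

Definition kplaced (k : nat) (phi : 'I_k -> T -> T) (v : T) : Prop :=
  forall i j : 'I_k, i != j -> phi i v != phi j v.

Definition kfixed (k : nat) (phi : 'I_k -> T -> T) (v : T) : Prop :=
  forall i j : 'I_k, phi i v = phi j v.

Definition nbhd (e : rel T) (S : {set T}) (u : T) : {set T} := [set v in S | e u v].

Definition NG (e : rel T) (X : {set T}) : {set T} :=
  [set v | (v \notin X) && [exists x in X, e x v]].

Definition independent (e : rel T) (U : {set T}) : Prop :=
  forall u v, u \in U -> v \in U -> ~~ e u v.

Definition has_nb_in (e : rel T) (S : {set T}) (x : T) : Prop :=
  exists2 z, z \in S & e x z.

(* G is an (A,U,B)-structure graph w.r.t. k, where A = G[SA], B = G[SB].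
   The (at most one) vertex a of condition (i) is any vertex of SA \ U with a
   neighbour in SB \ U. *)
Definition structure_graph (e : rel T) (k : nat) (SA U SB : {set T}) : Prop :=
  [/\ [disjoint SA & SB],
      independent e U,
      (SA :|: SB :|: U = [set: T] /\ [disjoint SA & U] /\ [disjoint SB & U]) \/
      (SA :|: SB = [set: T] /\ (U \subset SA \/ U \subset SB)),
      (forall x y, x \in SA :\: U -> y \in SA :\: U ->
         has_nb_in e (SB :\: U) x -> has_nb_in e (SB :\: U) y -> x = y) /\
      (forall u, u \in U ->
         ([disjoint U & SA] -> #|nbhd e SA u| <= 1) /\
         ([disjoint U & SB] -> #|nbhd e SB u| <= 1)) &
      (exists phiA : 'I_k -> T -> T,
         [/\ is_placement e SA phiA,
             (forall v, v \in SA -> v \in NG e U -> kplaced phiA v),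
             (forall a, a \in SA :\: U -> has_nb_in e (SB :\: U) a -> kplaced phiA a) &
             (forall u, u \in SA -> u \in U -> kfixed phiA u)]) /\
      (exists phiB : 'I_k -> T -> T,
         [/\ is_placement e SB phiB,
             (forall v, v \in SB -> v \in NG e U -> kplaced phiB v) &
             (forall u, u \in SB -> u \in U -> kfixed phiB u)])].

End Defs.

From mathcomp Require Import all_boot.

Set Implicit Arguments.
Unset Strict Implicit.
Unset Printing Implicit Defensive.

(* Glue the placements of A and B into maps f_i acting as phiA_i on V(A), as
   phiB_i on V(B) and as the identity elsewhere (on vertices of U).  Each f_i
   preserves these three parts, so an edge common to the images of f_i and
   f_j, i <> j, comes from edges xy and x'y' with x, x' and y, y' in the same
   parts.  Inside A or inside B this contradicts the given placements.  If an
   endpoint u lies in U, it is fixed by both maps, so u = u'; as u has at most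
   one neighbour in the other part, the other endpoints coincide too, at a
   k-placed vertex of N_G(U).  A cross edge avoiding U has, by condition (i),
   the vertex a as its A-end on both sides, and a is k-placed. *)

Section Placements.
Variables (T : finType) (e : rel T).

Lemma placement_no_edge_collision (S : {set T}) k (phi : 'I_k -> T -> T)
    i j x y x' y' :
  is_placement e S phi -> i != j -> e x y -> e x' y' ->
  x \in S -> y \in S -> x' \in S -> y' \in S ->
  phi i x = phi j x' -> phi i y = phi j y' -> False.
Proof.
move=> [_ disj] ij exy exy' xS yS x'S y'S eqx eqy.
have mem_i : [set phi i x; phi i y] \in edge_image e S (phi i).
  by apply: imset2_f; rewrite ?inE ?yS.
have mem_j : [set phi i x; phi i y] \in edge_image e S (phi j).
  by rewrite eqx eqy; apply: imset2_f; rewrite ?inE ?y'S.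
by rewrite (disjointFr (disj i j ij) mem_i) in mem_j.
Qed.

Lemma edge_images_disjoint (S : {set T}) (f g : T -> T) :
  symmetric e -> irreflexive e -> {in S &, injective f} ->
  (forall x y x' y', x \in S -> y \in S -> x' \in S -> y' \in S ->
     e x y -> e x' y' -> f x = g x' -> f y = g y' -> False) ->
  [disjoint edge_image e S f & edge_image e S g].
Proof.
move=> e_sym e_irr f_inj no_collision.
rewrite -setI_eq0; apply/eqP/setP => P; rewrite !inE.
apply/negP => /andP[/imset2P[x y xS + ->] /imset2P[x' y' x'S + eq_edges]].
rewrite !inE => /andP[yS exy] /andP[y'S exy'].
have loop_free : f x = f y -> False.
  by move=> /f_inj eq_xy; move: exy; rewrite eq_xy ?e_irr.
have : f y \in [set g x'; g y'] by rewrite -eq_edges set22.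
have : f x \in [set g x'; g y'] by rewrite -eq_edges set21.
case/set2P => eqx; case/set2P => eqy.
- by apply: loop_free; rewrite eqx eqy.
- exact: (no_collision x y x' y').
- by apply: (no_collision y x x' y'); rewrite // e_sym.
- by apply: loop_free; rewrite eqx eqy.
Qed.

Lemma nbhd_le1_eq (S : {set T}) u a b :
  #|nbhd e S u| <= 1 -> a \in S -> b \in S -> e u a -> e u b -> a = b.
Proof. by move=> /card_le1_eqP nb_u aS bS eua eub; apply: nb_u; rewrite inE ?aS ?bS. Qed.

Variable U : {set T}.
Hypothesis U_indep : independent e U.

Lemma U_neighbour_in_NG u v : u \in U -> e u v -> v \in NG e U.
Proof.
move=> uU euv; rewrite inE; apply/andP; split; last by apply/existsP; exists u; rewrite uU.
by apply/negP => vU; move: (U_indep uU vU); rewrite euv.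
Qed.

Lemma U_neighbour_collision (S : {set T}) k (phi : 'I_k -> T -> T) i j u x x' :
  (forall v, v \in S -> v \in NG e U -> kplaced phi v) ->
  u \in U -> #|nbhd e S u| <= 1 -> x \in S -> x' \in S -> e u x -> e u x' ->
  i != j -> phi i x = phi j x' -> False.
Proof.
move=> placed uU nb_u xS x'S eux eux' ij.
rewrite -(nbhd_le1_eq nb_u xS x'S eux eux').
by apply/eqP; apply: placed (U_neighbour_in_NG uU eux) i j ij.
Qed.

Lemma fixed_U_cross_collision (S1 S2 : {set T}) k (phi1 phi2 : 'I_k -> T -> T)
    i j x y x' y' :
  {in S1 &, injective (phi1 j)} ->
  (forall v, v \in S2 -> v \in NG e U -> kplaced phi2 v) ->
  kfixed phi1 x -> x \in U -> #|nbhd e S2 x| <= 1 ->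
  x \in S1 -> x' \in S1 -> y \in S2 -> y' \in S2 -> e x y -> e x' y' ->
  i != j -> phi1 i x = phi1 j x' -> phi2 i y = phi2 j y' -> False.
Proof.
move=> inj1 placed2 fixed_x xU nb_x xS1 x'S1 yS2 y'S2 exy exy' ij eqx.
have eq_x : x = x' by apply: inj1 => //; rewrite -eqx; apply: fixed_x.
subst x'.
exact: U_neighbour_collision placed2 xU nb_x yS2 y'S2 exy exy' ij.
Qed.

End Placements.

Section StructureGraph.
Variables (T : finType) (e : rel T) (k : nat) (SA U SB : {set T}).
Variables phiA phiB : 'I_k -> T -> T.

Hypotheses (e_sym : symmetric e) (e_irr : irreflexive e).
Hypotheses (disjAB : [disjoint SA & SB]) (U_indep : independent e U).
Hypothesis partition :
  (SA :|: SB :|: U = [set: T] /\ [disjoint SA & U] /\ [disjoint SB & U]) \/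
  (SA :|: SB = [set: T] /\ (U \subset SA \/ U \subset SB)).
Hypothesis unique_cross_vertex : forall x y, x \in SA :\: U -> y \in SA :\: U ->
  has_nb_in e (SB :\: U) x -> has_nb_in e (SB :\: U) y -> x = y.
Hypothesis U_nbhd_le1 : forall u, u \in U ->
  ([disjoint U & SA] -> #|nbhd e SA u| <= 1) /\
  ([disjoint U & SB] -> #|nbhd e SB u| <= 1).
Hypotheses (plA : is_placement e SA phiA) (plB : is_placement e SB phiB).
Hypothesis placedA : forall v, v \in SA -> v \in NG e U -> kplaced phiA v.
Hypothesis placed_cross : forall a, a \in SA :\: U ->
  has_nb_in e (SB :\: U) a -> kplaced phiA a.
Hypothesis fixedA : forall u, u \in SA -> u \in U -> kfixed phiA u.
Hypothesis placedB : forall v, v \in SB -> v \in NG e U -> kplaced phiB v.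
Hypothesis fixedB : forall u, u \in SB -> u \in U -> kfixed phiB u.

Lemma U_disjoint_SB u : u \in U -> u \in SA -> [disjoint U & SB].
Proof.
move=> uU uA; case: partition => [[_ [disjAU _]] | [_ [U_A | U_B]]].
- by move: (disjointFr disjAU uA); rewrite uU.
- exact: disjointWl U_A disjAB.
- by move: (disjointFr disjAB uA); rewrite (subsetP U_B _ uU).
Qed.

Lemma U_disjoint_SA u : u \in U -> u \in SB -> [disjoint U & SA].
Proof.
move=> uU uB; case: partition => [[_ [_ disjBU]] | [_ [U_A | U_B]]].
- by move: (disjointFr disjBU uB); rewrite uU.
- by move: (disjointFl disjAB uB); rewrite (subsetP U_A _ uU).
- by apply: disjointWl U_B _; rewrite disjoint_sym.
Qed.

Lemma outside_in_U z : z \notin SA -> z \notin SB ->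
  [/\ z \in U, [disjoint U & SA] & [disjoint U & SB]].
Proof.
move=> /negPf zA /negPf zB.
case: partition => [[cover [disjAU disjBU]] | [cover _]].
  have : z \in SA :|: SB :|: U by rewrite cover inE.
  by rewrite !inE zA zB /= => zU; split; rewrite // disjoint_sym.
have : z \in SA :|: SB by rewrite cover inE.
by rewrite !inE zA zB.
Qed.

Definition glue (i : 'I_k) (z : T) : T :=
  if z \in SA then phiA i z else if z \in SB then phiB i z else z.

Lemma mem_glueA i z : (glue i z \in SA) = (z \in SA).
Proof.
rewrite /glue; case zA: (z \in SA); first exact: (plA.1 i).2.
case zB: (z \in SB); rewrite ?zA //.
by rewrite (disjointFl disjAB) //; apply: (plB.1 i).2.
Qed.

Lemma mem_glueB i z : (glue i z \in SB) = (z \in SB).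
Proof.
rewrite /glue; case zA: (z \in SA).
  by rewrite (disjointFr disjAB zA) (disjointFr disjAB) //; apply: (plA.1 i).2.
by case zB: (z \in SB); rewrite ?zB //; apply: (plB.1 i).2.
Qed.

Lemma glue_eq_cases i j x x' : glue i x = glue j x' ->
  [\/ [/\ x \in SA, x' \in SA & phiA i x = phiA j x'],
      [/\ x \in SB, x' \in SB & phiB i x = phiB j x'] |
      [/\ x \notin SA, x \notin SB & x' = x]].
Proof.
move=> eq_glue.
have x'A : (x' \in SA) = (x \in SA) by rewrite -(mem_glueA j) -eq_glue mem_glueA.
have x'B : (x' \in SB) = (x \in SB) by rewrite -(mem_glueB j) -eq_glue mem_glueB.
move: eq_glue; rewrite /glue x'A x'B.
case: ifPn => xA; first by constructor 1; rewrite -?x'A.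
by case: ifPn => xB; [constructor 2; rewrite -?x'B | constructor 3].
Qed.

Lemma glue_inj i : injective (glue i).
Proof.
move=> x y /glue_eq_cases[[xA yA] | [xB yB] | [_ _ ->]] //.
- exact: (plA.1 i).1.
- exact: (plB.1 i).1.
Qed.

Lemma cross_collision i j x y x' y' :
  i != j -> e x y -> e x' y' -> x \in SA -> x' \in SA -> y \in SB -> y' \in SB ->
  phiA i x = phiA j x' -> phiB i y = phiB j y' -> False.
Proof.
move=> ij exy exy' xA x'A yB y'B eqx eqy.
have ji : j != i by rewrite eq_sym.
have eyx : e y x by rewrite e_sym.
have eyx' : e y' x' by rewrite e_sym.
case xU: (x \in U).
  apply: (fixed_U_cross_collision U_indep (plA.1 j).1 placedB) eqx eqy => //.
  - exact: fixedA.
  - exact: (U_nbhd_le1 xU).2 (U_disjoint_SB xU xA).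
case x'U: (x' \in U).
  apply: (fixed_U_cross_collision U_indep (plA.1 i).1 placedB) (esym eqx) (esym eqy) => //.
  - exact: fixedA.
  - exact: (U_nbhd_le1 x'U).2 (U_disjoint_SB x'U x'A).
case yU: (y \in U).
  apply: (fixed_U_cross_collision U_indep (plB.1 j).1 placedA) eqy eqx => //.
  - exact: fixedB.
  - exact: (U_nbhd_le1 yU).1 (U_disjoint_SA yU yB).
case y'U: (y' \in U).
  apply: (fixed_U_cross_collision U_indep (plB.1 i).1 placedA) (esym eqy) (esym eqx) => //.
  - exact: fixedB.
  - exact: (U_nbhd_le1 y'U).1 (U_disjoint_SA y'U y'B).
have x_cross : x \in SA :\: U by rewrite inE xU.
have x_nb : has_nb_in e (SB :\: U) x by exists y; rewrite // inE yU.
have eq_x : x = x'.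
  apply: unique_cross_vertex x_cross _ x_nb _; first by rewrite inE x'U.
  by exists y'; rewrite // inE y'U.
subst x'.
by move: (placed_cross x_cross x_nb ij); rewrite eqx eqxx.
Qed.

Lemma outside_neighbour_collisionA i j u x x' : i != j ->
  u \notin SA -> u \notin SB -> x \in SA -> x' \in SA -> e x u -> e x' u ->
  phiA i x = phiA j x' -> False.
Proof.
move=> ij uA uB xA x'A exu ex'u; have [uU disjUA _] := outside_in_U uA uB.
by apply: (U_neighbour_collision U_indep placedA uU ((U_nbhd_le1 uU).1 disjUA));
  rewrite // e_sym.
Qed.

Lemma outside_neighbour_collisionB i j u x x' : i != j ->
  u \notin SA -> u \notin SB -> x \in SB -> x' \in SB -> e x u -> e x' u ->
  phiB i x = phiB j x' -> False.
Proof.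
move=> ij uA uB xB x'B exu ex'u; have [uU _ disjUB] := outside_in_U uA uB.
by apply: (U_neighbour_collision U_indep placedB uU ((U_nbhd_le1 uU).2 disjUB));
  rewrite // e_sym.
Qed.

Lemma glue_collision i j x y x' y' : i != j -> e x y -> e x' y' ->
  glue i x = glue j x' -> glue i y = glue j y' -> False.
Proof.
move=> ij exy exy' /glue_eq_cases[[xA x'A eqx]|[xB x'B eqx]|[xA xB x'x]]
  /glue_eq_cases[[yA y'A eqy]|[yB y'B eqy]|[yA yB y'y]].
- exact: (placement_no_edge_collision plA ij exy exy').
- exact: (cross_collision ij exy exy').
- by subst y'; apply: (outside_neighbour_collisionA ij yA yB xA x'A exy exy').
- by apply: (cross_collision ij _ _ yA y'A xB x'B eqy eqx); rewrite e_sym.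
- exact: (placement_no_edge_collision plB ij exy exy').
- by subst y'; apply: (outside_neighbour_collisionB ij yA yB xB x'B exy exy').
- by subst x'; apply: (outside_neighbour_collisionA ij xA xB yA y'A _ _ eqy); rewrite e_sym.
- by subst x'; apply: (outside_neighbour_collisionB ij xA xB yB y'B _ _ eqy); rewrite e_sym.
- have [[xU _ _] [yU _ _]] := (outside_in_U xA xB, outside_in_U yA yB).
  by move: (U_indep xU yU); rewrite exy.
Qed.

Lemma glue_placement : is_placement e [set: T] glue.
Proof.
split=> [i | i j ij]; first by split=> [x y _ _ | x _]; [apply: glue_inj | rewrite inE].
apply: edge_images_disjoint => // [x y _ _ | x y x' y' _ _ _ _]; first exact: glue_inj.
exact: glue_collision.
Qed.

End StructureGraph.

Theorem mainTheorem3 (T : finType) (e : rel T) (k : nat) (SA U SB : {set T}) :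
  0 < k -> simple_graph e -> structure_graph e k SA U SB -> placeable e k.
Proof.
move=> _ [e_sym e_irr] [disjAB U_indep partition [unique_cross U_nbhd_le1]
  [[phiA [plA placedA placed_cross fixedA]] [phiB [plB placedB fixedB]]]].
exists (glue SA SB phiA phiB).
exact: (glue_placement e_sym e_irr disjAB U_indep partition unique_cross
  U_nbhd_le1 plA plB placedA placed_cross fixedA placedB fixedB).
Qed.
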